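(* Let $R$ be a ring with a separated Zariskian filtration $w:R\to\mathbb{Z}\cup\{\infty\}$, with Rees ring $\tilde R$, maps $\rho_1,\rho_2$, Ore sets $T$, $S$, $\tilde S$ and localisation map $\alpha$ as described in the context, and assume $sr\neq0$ for all $s\in S$ and nonzero $r\in R$. Then $\rho_1$ and $\rho_2$ extend to ring homomorphisms $\rho_1:\tilde S^{-1}\tilde R\to S^{-1}R$, $\tilde s^{-1}\tilde r\mapsto\rho_1(\tilde s)^{-1}\rho_1(\tilde r)$, and $\rho_2:\tilde S^{-1}\tilde R\to T^{-1}\mathrm{gr}_w(R)$, $\tilde s^{-1}\tilde r\mapsto \alpha(\rho_2(\tilde s))^{-1}\alpha(\rho_2(\tilde r))$, with kernels $(t-1)\tilde S^{-1}\tilde R$ and $t\tilde S^{-1}\tilde R$ respectively, and $\rho_2$ is graded.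
   Context: The filtration $w$ is descending with level sets $F_nR=\{r:w(r)\geq n\}$ and $\mathrm{gr}_w(R)=\bigoplus_nF_nR/F_{n+1}R$; for $r\ne0$, $\mathrm{gr}(r)=r+F_{w(r)+1}R$. The Rees ring is the graded ring $\tilde R=\bigoplus_{n\in\mathbb{Z}}F_nR\cdot t^{-n}$ with $(at^{-n})(bt^{-m})=abt^{-(n+m)}$, the element $rt^{-n}$ ($r\in F_nR$) having degree $n$; $t=1\cdot t^{1}$ is a central element of degree $-1$. Zariskian means $\tilde R$ is Noetherian and $F_1R$ is contained in the Jacobson radical of $F_0R$. $\rho_1:\tilde R\to R$ is the ring homomorphism $\sum r_nt^{-n}\mapsto\sum r_n$ and $\rho_2:\tilde R\to\mathrm{gr}_w(R)$ the graded homomorphism $rt^{-n}\mapsto r+F_{n+1}R$. $T$ is a multiplicatively closed, left Ore set of homogeneous elements of $\mathrm{gr}_w(R)$, $\alpha:\mathrm{gr}_w(R)\to T^{-1}\mathrm{gr}_w(R)$ the localisation map, $S=\{r\in R:\mathrm{gr}(r)\in T\}$ and $\tilde S=\{s\in\tilde R: s\text{ homogeneous},\ \rho_2(s)\in T\}$; $S$ and $\tilde S$ are left Ore sets in $R$ and $\tilde R$. Under the stated assumption $R\subseteq S^{-1}R$ and $\tilde R\subseteq\tilde S^{-1}\tilde R$, and $\tilde S^{-1}\tilde R$ is graded with degree-$n$ part $\{\tilde s^{-1}\tilde r:\tilde r\text{ homogeneous},\ \deg\tilde r-\deg\tilde s=n\}$. *)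

From HB Require Import structures.
From mathcomp Require Import all_boot all_order all_algebra.

Set Implicit Arguments.
Unset Strict Implicit.
Unset Printing Implicit Defensive.

Import Order.TTheory GRing.Theory Num.Theory.
Local Open Scope ring_scope.

(* Filtrations w : R -> Z ∪ {oo}, encoded as option int (None = oo).    *)

Definition geo (n : int) (x : option int) : bool :=
  if x is Some m then (n <= m) else true.

Definition Fil (R : ringType) (w : R -> option int) (n : int) : R -> bool :=
  fun r => geo n (w r).

Definition is_filtration (R : ringType) (w : R -> option int) : Prop :=
  [/\ forall n, Fil w n 0,
      forall n a b, Fil w n a -> Fil w n b -> Fil w n (a - b),
      forall n m a b, Fil w n a -> Fil w m b -> Fil w (n + m) (a * b)
    & Fil w 0 1].

Definition separated (R : ringType) (w : R -> option int) : Prop :=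
  forall r, w r = None <-> r = 0.

(* gr(r) = r + F_{w(r)+1} R, as an element of gr_w(R) (sigma n r denotes the
   class r + F_{n+1}R in degree n); gr 0 is not used. *)
Definition grr (R G : ringType) (w : R -> option int) (sigma : int -> R -> G)
  (r : R) : G :=
  if w r is Some k then sigma k r else 0.

Definition left_ideal_in (A : ringType) (B : A -> Prop) (I : A -> Prop) : Prop :=
  [/\ forall x, I x -> B x, I 0,
      forall x y, I x -> I y -> I (x - y)
    & forall a x, B a -> I x -> I (a * x)].

Definition right_ideal (A : ringType) (I : A -> Prop) : Prop :=
  [/\ I 0, forall x y, I x -> I y -> I (x - y)
    & forall a x, I x -> I (x * a)].

Definition left_ideal (A : ringType) (I : A -> Prop) : Prop :=
  left_ideal_in (fun _ => True) I.

Definition noetherian (A : ringType) : Prop :=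
  (forall I : nat -> A -> Prop, (forall n, left_ideal (I n)) ->
     (forall n x, I n x -> I n.+1 x) ->
     exists N, forall n x, (N <= n)%N -> I n x -> I N x) /\
  (forall I : nat -> A -> Prop, (forall n, right_ideal (I n)) ->
     (forall n x, I n x -> I n.+1 x) ->
     exists N, forall n x, (N <= n)%N -> I n x -> I N x).

Definition maximal_left_ideal_in (A : ringType) (B : A -> Prop) (I : A -> Prop)
  : Prop :=
  [/\ left_ideal_in B I, ~ I 1 &
      forall J, left_ideal_in B J -> (forall x, I x -> J x) -> ~ J 1 ->
        forall x, J x -> I x].

Definition in_jacobson (A : ringType) (B : A -> Prop) (x : A) : Prop :=
  B x /\ forall I, maximal_left_ideal_in B I -> I x.

(* Rt = ⊕_n F_n R t^{-n}; e n r stands for r t^{-n} (r ∈ F_n R). *)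
Definition is_rees_ring (R Rt : ringType) (w : R -> option int)
  (e : int -> R -> Rt) : Prop :=
  [/\ forall n a b, Fil w n a -> Fil w n b -> e n (a + b) = e n a + e n b,
      forall n a, Fil w n a -> e n a = 0 -> a = 0,
      forall n m a b, Fil w n a -> Fil w m b -> e n a * e m b = e (n + m) (a * b),
      forall x : Rt, exists s : seq (int * R),
        (forall p, p \in s -> Fil w p.1 p.2) /\ x = \sum_(p <- s) e p.1 p.2
    & forall s : seq (int * R), uniq (map fst s) ->
        (forall p, p \in s -> Fil w p.1 p.2) ->
        \sum_(p <- s) e p.1 p.2 = 0 -> forall p, p \in s -> p.2 = 0].

(* G = gr_w R = ⊕_n F_n R / F_{n+1} R; sigma n r stands for r + F_{n+1} R
   in degree n (r ∈ F_n R), multiplication induced from R. *)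
Definition is_assoc_graded (R G : ringType) (w : R -> option int)
  (sigma : int -> R -> G) : Prop :=
  [/\ forall n a b, Fil w n a -> Fil w n b ->
        sigma n (a + b) = sigma n a + sigma n b,
      forall n a, Fil w n a -> (sigma n a = 0 <-> Fil w (n + 1) a),
      forall n m a b, Fil w n a -> Fil w m b ->
        sigma n a * sigma m b = sigma (n + m) (a * b),
      forall x : G, exists s : seq (int * R),
        (forall p, p \in s -> Fil w p.1 p.2) /\ x = \sum_(p <- s) sigma p.1 p.2
    & forall s : seq (int * R), uniq (map fst s) ->
        (forall p, p \in s -> Fil w p.1 p.2) ->
        \sum_(p <- s) sigma p.1 p.2 = 0 ->
        forall p, p \in s -> sigma p.1 p.2 = 0].

Definition rees_deg (R Rt : ringType) (w : R -> option int)
  (e : int -> R -> Rt) (n : int) (x : Rt) : Prop :=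
  exists2 a, Fil w n a & x = e n a.

Definition gr_deg (R G : ringType) (w : R -> option int)
  (sigma : int -> R -> G) (n : int) (x : G) : Prop :=
  exists2 a, Fil w n a & x = sigma n a.

Definition zariskian (R Rt : ringType) (w : R -> option int) : Prop :=
  noetherian Rt /\ forall x, Fil w 1 x -> in_jacobson (Fil w 0) x.

Definition mult_closed (A : ringType) (T : A -> Prop) : Prop :=
  T 1 /\ forall x y, T x -> T y -> T (x * y).

Definition left_ore (A : ringType) (T : A -> Prop) : Prop :=
  forall (a s : A), T s -> exists s' a', T s' /\ s' * a = a' * s.

Definition left_ring_of_fractions (A : ringType) (S : A -> Prop)
  (Q : unitRingType) (iota : {rmorphism A -> Q}) : Prop :=
  [/\ forall s, S s -> iota s \is a GRing.unit,
      forall q : Q, exists s a, S s /\ q = (iota s)^-1 * iota a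
    & forall a, iota a = 0 <-> exists2 s, S s & s * a = 0].

(* Both rho_1 and rho_2 send the Ore set S~ to units (for homogeneous s in S~,
   rho_2 s is in T, hence nonzero, so w(rho_1 s) = deg s and rho_1 s lies in S),
   so they extend through the universal property of the left ring of fractions;
   the Ore condition needed there is read off from the fraction representation
   itself.  Since t is central, the kernels reduce to torsion computations in the
   Rees ring.  If sum_n r_n = 0 then, with m the least degree,
   sum_n r_n t^-n = sum_n (1 - t^(n-m)) r_n t^-n is a multiple of t - 1, and
   S-torsion is excluded by the regularity hypothesis.  If sum_n (r_n + F_(n+1))
   vanishes with distinct degrees then each r_n lies in F_(n+1), so
   r_n t^-n = t r_n t^-(n+1); a T-torsion witness u lifts to a homogeneous
   element of S~. *)

From HB Require Import structures.
From mathcomp Require Import all_boot all_order all_algebra.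
From mathcomp Require Import zify.
From Stdlib Require Import ClassicalEpsilon.
Import Order.TTheory GRing.Theory Num.Theory.
Local Open Scope ring_scope.

Set Implicit Arguments.
Unset Strict Implicit.
Unset Printing Implicit Defensive.

Section FractionArithmetic.
Variable B : unitRingType.
Implicit Types s a c d u v : B.

Lemma subr_frac s1 a1 s2 a2 c d :
  c * s2 = d * s1 ->
  c \is a GRing.unit -> s1 \is a GRing.unit -> s2 \is a GRing.unit ->
  s1^-1 * a1 - s2^-1 * a2 = (c * s2)^-1 * (d * a1 - c * a2).
Proof.
move=> e uc us1 us2; have ucs2 : c * s2 \is a GRing.unit by rewrite unitrMl.
rewrite mulrBr !mulrA invrM // mulrVK // -[d](mulrK us1) -e !mulrA.
by rewrite mulrVK // mulVr // mul1r.
Qed.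

Lemma mulr_frac s1 a1 s2 a2 u v :
  u * a1 = v * s2 ->
  u \is a GRing.unit -> s1 \is a GRing.unit -> s2 \is a GRing.unit ->
  s1^-1 * a1 * (s2^-1 * a2) = (u * s1)^-1 * (v * a2).
Proof.
move=> e uu us1 us2.
rewrite invrM // -!mulrA; congr (_ * _); rewrite !mulrA; congr (_ * _).
by rewrite -(mulKr uu a1) e -mulrA mulrK.
Qed.

End FractionArithmetic.

Section LeftRingOfFractions.
Variables (A : ringType) (S : A -> Prop) (Q : unitRingType).
Variable iota : {rmorphism A -> Q}.
Hypotheses (S_mul : mult_closed S) (S_frac : left_ring_of_fractions S iota).

Lemma frac_unit s : S s -> iota s \is a GRing.unit.
Proof. by case: S_frac => + _ _; apply. Qed.

Lemma frac_surj q : exists s a, S s /\ q = (iota s)^-1 * iota a.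
Proof. by case: S_frac => _ + _; apply. Qed.

Lemma frac_ker a : iota a = 0 -> exists2 s, S s & s * a = 0.
Proof. by case: S_frac => _ _ /(_ a) []. Qed.

Lemma frac_not0 : ~ S 0.
Proof. by move=> /frac_unit; rewrite rmorph0 unitr0. Qed.

Lemma frac_ore a s : S s -> exists u v, S u /\ u * a = v * s.
Proof.
move=> hs; have [u [v [hu hq]]] := frac_surj (iota a * (iota s)^-1).
have : iota (u * a - v * s) = 0.
  rewrite rmorphB !rmorphM.
  have -> : iota v = iota u * (iota a / iota s) by rewrite hq mulVKr ?frac_unit.
  by rewrite -mulrA divrK ?frac_unit // subrr.
case/frac_ker=> z hz /eqP; rewrite mulrBr subr_eq0 !mulrA => /eqP e.
by exists (z * u), (z * v); split => //; apply: S_mul.2.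
Qed.

Lemma frac_central c : (forall x, c * x = x * c) ->
  forall q, iota c * q = q * iota c.
Proof.
move=> cC q; have [s [a [hs ->]]] := frac_surj q.
have comm_c x : GRing.comm (iota c) (iota x) by rewrite /GRing.comm -!rmorphM cC.
exact/commrM/comm_c/commrV/comm_c.
Qed.

Variables (B : unitRingType) (f : {rmorphism A -> B}).
Hypothesis f_unit : forall s, S s -> f s \is a GRing.unit.

Lemma frac_rmorph_ker a : iota a = 0 -> f a = 0.
Proof.
case/frac_ker=> s hs /(congr1 f); rewrite rmorphM rmorph0 => e.
by rewrite -[f a](mulKr (f_unit hs)) e mulr0.
Qed.

Lemma frac_rmorph_eq s a s' a' : S s -> S s' ->
  (iota s)^-1 * iota a = (iota s')^-1 * iota a' ->
  (f s)^-1 * f a = (f s')^-1 * f a'.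
Proof.
move=> hs hs' /eqP; rewrite -subr_eq0.
have [c [d [hc e]]] := frac_ore s' hs.
have eQ : iota c * iota s' = iota d * iota s by rewrite -!rmorphM e.
have eB : f c * f s' = f d * f s by rewrite -!rmorphM e.
rewrite (subr_frac _ _ eQ) ?frac_unit // -!rmorphM -rmorphB => /eqP h.
have /frac_rmorph_ker ker : iota (d * a - c * a') = 0.
  by rewrite -[LHS](mulVKr (frac_unit (S_mul.2 _ _ hc hs'))) h mulr0.
apply/eqP; rewrite -subr_eq0 (subr_frac _ _ eB) ?f_unit //.
by rewrite -!rmorphM -rmorphB ker mulr0.
Qed.

Definition frac_lift (q : Q) : B :=
  epsilon (inhabits 0) (fun b => exists s a,
    [/\ S s, q = (iota s)^-1 * iota a & b = (f s)^-1 * f a]).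

Lemma frac_liftE s a : S s ->
  frac_lift ((iota s)^-1 * iota a) = (f s)^-1 * f a.
Proof.
move=> hs; rewrite /frac_lift; set P := fun b => _.
have hP : exists b, P b by exists ((f s)^-1 * f a), s, a.
have [s' [a' [hs' e ->]]] := epsilon_spec (inhabits 0) P hP.
by apply: frac_rmorph_eq.
Qed.

Lemma frac_liftB : {morph frac_lift : x y / x - y}.
Proof.
move=> q1 q2.
have [s1 [a1 [h1 ->]]] := frac_surj q1; have [s2 [a2 [h2 ->]]] := frac_surj q2.
have [c [d [hc e]]] := frac_ore s2 h1.
have eQ : iota c * iota s2 = iota d * iota s1 by rewrite -!rmorphM e.
have eB : f c * f s2 = f d * f s1 by rewrite -!rmorphM e.
rewrite (subr_frac _ _ eQ) ?frac_unit // -!rmorphM -rmorphB.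
have hcs2 : S (c * s2) by apply: S_mul.2.
rewrite !frac_liftE // (subr_frac _ _ eB) ?f_unit //.
by rewrite -!rmorphM -rmorphB.
Qed.

Lemma frac_liftM : {morph frac_lift : x y / x * y}.
Proof.
move=> q1 q2.
have [s1 [a1 [h1 ->]]] := frac_surj q1; have [s2 [a2 [h2 ->]]] := frac_surj q2.
have [u [v [hu e]]] := frac_ore a1 h2.
have eQ : iota u * iota a1 = iota v * iota s2 by rewrite -!rmorphM e.
have eB : f u * f a1 = f v * f s2 by rewrite -!rmorphM e.
rewrite (mulr_frac _ eQ) ?frac_unit // -!rmorphM.
have hus1 : S (u * s1) by apply: S_mul.2.
rewrite !frac_liftE // (mulr_frac _ eB) ?f_unit //.
by rewrite -!rmorphM.
Qed.

Lemma frac_lift1 : frac_lift 1 = 1.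
Proof.
by move: (frac_liftE 1 S_mul.1); rewrite !rmorph1 !invr1 !mulr1.
Qed.

Lemma frac_lift_rmorphism : exists F : {rmorphism Q -> B},
  forall s a, S s -> F ((iota s)^-1 * iota a) = (f s)^-1 * f a.
Proof.
exists (HB.pack_for (GRing.RMorphism.type Q B) frac_lift
  (GRing.isZmodMorphism.Build Q B frac_lift frac_liftB)
  (GRing.isMonoidMorphism.Build Q B frac_lift
     (frac_lift1, frac_liftM))).
exact: frac_liftE.
Qed.

Lemma frac_lift_ker (F : {rmorphism Q -> B}) (c : A) :
  (forall s a, S s -> F ((iota s)^-1 * iota a) = (f s)^-1 * f a) ->
  (forall x, c * x = x * c) -> f c = 0 ->
  (forall a, f a = 0 -> exists s y, S s /\ s * a = c * y) ->
  forall q, F q = 0 <-> exists y, q = iota c * y.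
Proof.
move=> FE cC fc0 hker q; split; last first.
  move=> [y ->]; rewrite rmorphM.
  move: (FE 1 c S_mul.1); rewrite !rmorph1 !invr1 !mul1r => ->.
  by rewrite fc0 mul0r.
have [s [a [hs ->]]] := frac_surj q; rewrite FE // => h.
have /hker [s' [y [hs' e]]] : f a = 0 by rewrite -[f a](mulVKr (f_unit hs)) h mulr0.
exists ((iota (s' * s))^-1 * iota y).
rewrite mulrA (frac_central cC) -mulrA -rmorphM -e !rmorphM invrM ?frac_unit //.
by rewrite -mulrA mulKr ?frac_unit.
Qed.

End LeftRingOfFractions.

Lemma big_partition_undup (I : eqType) (K : eqType) (M : nmodType)
    (k : I -> K) (s : seq I) (F : I -> M) :
  \sum_(i <- s) F i = \sum_(d <- undup (map k s)) \sum_(i <- s | k i == d) F i.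
Proof.
symmetry; under eq_bigr do rewrite big_mkcond.
rewrite exchange_big /=; apply: eq_big_seq => i si.
rewrite (big_rem (k i)) /= ?mem_undup ?map_f // eqxx big1_seq ?addr0 //.
move=> d /andP [_ hd]; case: eqP => // kid; move: hd.
by rewrite -kid mem_rem_uniqF ?undup_uniq.
Qed.

Lemma exists_lbound (s : seq int) : exists m, forall x, x \in s -> m <= x.
Proof.
elim: s => [|y s [m hm]]; first by exists 0.
exists (Order.min y m) => x /predU1P [-> | /hm mx]; rewrite ge_min ?lexx //.
by rewrite mx orbT.
Qed.

Section Filtration.
Variables (R : ringType) (w : R -> option int).

Lemma Fil_le n m a : m <= n -> Fil w n a -> Fil w m a.
Proof. by rewrite /Fil /geo; case: (w a) => // k; apply: le_trans. Qed.

Hypothesis Hfil : is_filtration w.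

Lemma Fil0 n : Fil w n 0.
Proof. by case: Hfil. Qed.

Lemma FilD n a b : Fil w n a -> Fil w n b -> Fil w n (a + b).
Proof.
case: Hfil => F0 FB _ _ na nb.
by have := FB n a (0 - b) na (FB n 0 b (F0 n) nb); rewrite sub0r opprK.
Qed.

Lemma Fil_neg1_1 : Fil w (-1) 1.
Proof. by case: Hfil => _ _ _; apply: Fil_le. Qed.

Definition collect_deg (s : seq (int * R)) : seq (int * R) :=
  [seq (d, \sum_(p <- [seq p <- s | p.1 == d]) p.2) | d <- undup (map fst s)].

Lemma collect_deg_uniq s : uniq (map fst (collect_deg s)).
Proof. by rewrite -map_comp map_id_in ?undup_uniq. Qed.

Section HomogeneousMap.
Variables (M : zmodType) (h : int -> R -> M).
Hypothesis hD : forall n a b, Fil w n a -> Fil w n b -> h n (a + b) = h n a + h n b.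

Lemma homog0 n : h n 0 = 0.
Proof. by apply: (addrI (h n 0)); rewrite -hD ?Fil0 // !addr0. Qed.

Lemma homog_sum n (I : eqType) (r : seq I) (F : I -> R) :
  (forall i, i \in r -> Fil w n (F i)) ->
  Fil w n (\sum_(i <- r) F i) /\ h n (\sum_(i <- r) F i) = \sum_(i <- r) h n (F i).
Proof.
move=> rF; rewrite !big_seq.
apply: (big_rec2 (fun x y => Fil w n x /\ h n x = y)); first by rewrite Fil0 homog0.
by move=> i x y /rF Fi [Fx <-]; rewrite FilD ?hD.
Qed.

Lemma sum_collect_deg s : (forall p, p \in s -> Fil w p.1 p.2) ->
  (forall p, p \in collect_deg s -> Fil w p.1 p.2) /\
  \sum_(p <- collect_deg s) h p.1 p.2 = \sum_(p <- s) h p.1 p.2.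
Proof.
move=> sF; have dF d p : p \in [seq p <- s | p.1 == d] -> Fil w d p.2.
  by rewrite mem_filter => /andP [/eqP <-]; apply: sF.
split; first by move=> _ /mapP [d _ ->]; exact: (homog_sum (dF d)).1.
rewrite big_map (big_partition_undup fst); apply: eq_bigr => d _.
by rewrite (homog_sum (dF d)).2 big_filter; apply: eq_bigr => p /eqP ->.
Qed.

End HomogeneousMap.

Section Graded.
Variables (G : ringType) (sigma : int -> R -> G).
Hypothesis Hgr : is_assoc_graded w sigma.

Lemma grr_sigma n a : Fil w n a -> sigma n a <> 0 ->
  a <> 0 /\ grr w sigma a = sigma n a.
Proof.
case: Hgr => _ sigma0 _ _ _ na /(contra_not (sigma0 n a na).2) n1a.
split; first by move=> a0; apply: n1a; rewrite a0 Fil0.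
move: na n1a; rewrite /grr /Fil /geo; case: (w a) => [k|//] nk /negP n1k.
by have -> : k = n by lia.
Qed.

End Graded.

Section Rees.
Variables (Rt : ringType) (e : int -> R -> Rt).
Hypothesis Hrees : is_rees_ring w e.
Local Notation t := (e (-1) 1).

Lemma reesD n a b : Fil w n a -> Fil w n b -> e n (a + b) = e n a + e n b.
Proof. by case: Hrees => + _ _ _ _; apply. Qed.

Lemma reesM n m a b : Fil w n a -> Fil w m b -> e n a * e m b = e (n + m) (a * b).
Proof. by case: Hrees => _ _ + _ _; apply. Qed.

Lemma rees_span x : exists s : seq (int * R),
  (forall p, p \in s -> Fil w p.1 p.2) /\ x = \sum_(p <- s) e p.1 p.2.
Proof. by case: Hrees => _ _ _ + _; apply. Qed.

Lemma rees1 : e 0 1 = 1.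
Proof.
have F1 : Fil w 0 1 by case: Hfil.
have [s [sF s1]] := rees_span 1.
rewrite -[LHS]mulr1 [in LHS]s1 mulr_sumr [in RHS]s1; apply: eq_big_seq => p ps.
by rewrite reesM ?sF // add0r mul1r.
Qed.

Lemma rees_deg1 : rees_deg w e 0 1.
Proof. by exists 1; [case: Hfil | rewrite rees1]. Qed.

Lemma rees_degM n m x y :
  rees_deg w e n x -> rees_deg w e m y -> rees_deg w e (n + m) (x * y).
Proof.
case: Hfil => _ _ FM _ [a na ->] [b mb ->].
by exists (a * b); [apply: FM | rewrite reesM].
Qed.

Lemma rees_t_central x : t * x = x * t.
Proof.
have [s [sF ->]] := rees_span x; rewrite mulr_sumr mulr_suml.
apply: eq_big_seq => p ps; have Fm1 := Fil_neg1_1.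
by rewrite !reesM ?sF // mul1r mulr1 addrC.
Qed.

Lemma rees_tX n k a : Fil w (n + k%:Z) a -> t ^+ k * e (n + k%:Z) a = e n a.
Proof.
elim: k => [|k IH] nka; first by rewrite mul1r addr0.
rewrite exprSr -mulrA reesM ?Fil_neg1_1 // mul1r.
have -> : -1 + (n + k.+1%:Z) = n + k%:Z by lia.
by rewrite IH // (Fil_le _ nka) //; lia.
Qed.

Lemma rees_sub_lower_deg m n a : m <= n -> Fil w n a ->
  exists y, e n a - e m a = (t - 1) * y.
Proof.
move=> mn; have -> : n = m + `|n - m|%N%:Z by lia.
set k := `|n - m|%N => na.
exists (- (\sum_(i < k) t ^+ i) * e (m + k%:Z) a).
rewrite -(rees_tX na) -{1}[e _ a]mul1r -mulrBl -opprB subrX1.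
by rewrite !mulNr mulrN mulrA.
Qed.

Variable rho1 : {rmorphism Rt -> R}.
Hypothesis rho1E : forall n a, Fil w n a -> rho1 (e n a) = a.

Lemma rho1_t : rho1 t = 1.
Proof. exact/rho1E/Fil_neg1_1. Qed.

Lemma rees_ker_rho1 r : rho1 r = 0 -> exists y, r = (t - 1) * y.
Proof.
move=> r0; have [s [sF rs]] := rees_span r.
have [m hm] := exists_lbound (map fst s).
have smF p : p \in s -> Fil w m p.2.
  by move=> ps; apply: Fil_le (sF p ps); apply/hm/map_f.
have s0 : \sum_(p <- s) p.2 = 0.
  by rewrite -[RHS]r0 rs rmorph_sum; apply: eq_big_seq => p ps; rewrite rho1E ?sF.
have -> : r = \sum_(p <- s) (e p.1 p.2 - e m p.2).
  by rewrite sumrB -(homog_sum reesD smF).2 s0 (homog0 reesD) subr0.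
rewrite big_seq; apply: (big_ind (fun x => exists y, x = (t - 1) * y)).
- by exists 0; rewrite mulr0.
- by move=> _ _ [y ->] [z ->]; exists (y + z); rewrite mulrDr.
- by move=> p ps; apply: rees_sub_lower_deg (sF p ps); apply/hm/map_f.
Qed.

Variables (G : ringType) (sigma : int -> R -> G) (rho2 : {rmorphism Rt -> G}).
Hypothesis Hgr : is_assoc_graded w sigma.
Hypothesis rho2E : forall n a, Fil w n a -> rho2 (e n a) = sigma n a.

Lemma rho2_t : rho2 t = 0.
Proof.
case: Hgr => _ sigma0 _ _ _; rewrite rho2E ?Fil_neg1_1 //.
by apply/(sigma0 _ _ Fil_neg1_1); rewrite addNr; case: Hfil.
Qed.

Lemma rees_ker_rho2 r : rho2 r = 0 -> exists y, r = t * y.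
Proof.
case: Hgr => _ sigma0 _ _ sigma_uniq r0.
have [s0 [s0F rs]] := rees_span r.
have [sF s_sum] := sum_collect_deg reesD s0F.
set s := collect_deg s0 in sF s_sum; rewrite -{}s_sum in rs.
have sig0 : \sum_(p <- s) sigma p.1 p.2 = 0.
  by rewrite -[RHS]r0 rs rmorph_sum; apply: eq_big_seq => p ps; rewrite rho2E ?sF.
exists (\sum_(p <- s) e (p.1 + 1) p.2); rewrite rs mulr_sumr.
apply: eq_big_seq => p ps; have pF := sF p ps.
have pF1 : Fil w (p.1 + 1) p.2.
  by apply/(sigma0 _ _ pF); apply: sigma_uniq sig0 _ ps; rewrite ?collect_deg_uniq.
by rewrite reesM ?Fil_neg1_1 // mul1r addrC addrK.
Qed.

Variable T : G -> Prop.
Local Notation Stilde := (fun s => (exists n, rees_deg w e n s) /\ T (rho2 s)).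

Lemma Stilde_mult_closed : mult_closed T -> mult_closed Stilde.
Proof.
case=> T1 TM; split; first by split; [exists 0; apply: rees_deg1 | rewrite rmorph1].
move=> x y [[n xn] Tx] [[m ym] Ty]; split; first by exists (n + m); apply: rees_degM.
by rewrite rmorphM; apply: TM.
Qed.

Lemma rho1_Stilde s : ~ T 0 -> Stilde s -> rho1 s <> 0 /\ T (grr w sigma (rho1 s)).
Proof.
move=> T0 [[n [a na ->]]]; rewrite rho1E // rho2E // => Ta.
have sa0 : sigma n a <> 0 by move=> sa0; apply: T0; rewrite -sa0.
by have [a0 ->] := grr_sigma Hgr na sa0.
Qed.

Lemma frac_ker_rho1 (QS : unitRingType) (iS : {rmorphism R -> QS}) :
  T 1 -> left_ring_of_fractions (fun r => r <> 0 /\ T (grr w sigma r)) iS ->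
  (forall s r, s <> 0 -> T (grr w sigma s) -> r <> 0 -> s * r <> 0) ->
  forall a, iS (rho1 a) = 0 -> exists s y, Stilde s /\ s * a = (t - 1) * y.
Proof.
move=> T1 HiS Hreg a /(frac_ker HiS) [s [s0 sT] sa0].
have /rees_ker_rho1 [y ->] : rho1 a = 0.
  by case: (eqVneq (rho1 a) 0) => // /eqP /(Hreg _ _ s0 sT).
exists 1, y; rewrite mul1r; split => //.
by split; [exists 0; apply: rees_deg1 | rewrite rmorph1].
Qed.

Lemma frac_ker_rho2 (QT : unitRingType) (alpha : {rmorphism G -> QT}) :
  left_ring_of_fractions T alpha ->
  (forall x, T x -> exists n, gr_deg w sigma n x) ->
  forall a, alpha (rho2 a) = 0 -> exists s y, Stilde s /\ s * a = t * y.
Proof.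
move=> Halpha HThom a /(frac_ker Halpha) [u Tu ua0].
have [k [b kb ub]] := HThom u Tu.
have [|y ay] := rees_ker_rho2 (r := e k b * a); first by rewrite rmorphM rho2E // -ub.
by exists (e k b), y; split => //; split; [exists k, b | rewrite rho2E // -ub].
Qed.

End Rees.
End Filtration.

Unset Implicit Arguments.
Set Strict Implicit.

Theorem proposition1p3p3
  (R : ringType) (w : R -> option int)
  (Hfil : is_filtration w) (Hsep : separated w)
  (* the Rees ring, with r t^{-n} written e n r *)
  (Rt : ringType) (e : int -> R -> Rt) (Hrees : is_rees_ring w e)
  (Hzar : zariskian Rt w)
  (* the associated graded ring, with r + F_{n+1}R written sigma n r *)
  (G : ringType) (sigma : int -> R -> G) (Hgr : is_assoc_graded w sigma)
  (* rho_1 : sum r_n t^{-n} |-> sum r_n ;  rho_2 : r t^{-n} |-> r + F_{n+1}R *)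
  (rho1 : {rmorphism Rt -> R})
  (Hrho1 : forall n a, Fil w n a -> rho1 (e n a) = a)
  (rho2 : {rmorphism Rt -> G})
  (Hrho2 : forall n a, Fil w n a -> rho2 (e n a) = sigma n a)
  (* T : multiplicatively closed left Ore set of homogeneous elements *)
  (T : G -> Prop)
  (HThom : forall x, T x -> exists n, gr_deg w sigma n x)
  (HTmul : mult_closed T) (HTore : left_ore T)
  (* the localisation alpha : G -> T^{-1} G *)
  (QT : unitRingType) (alpha : {rmorphism G -> QT})
  (Halpha : left_ring_of_fractions T alpha)
  (* S^{-1} R *)
  (QS : unitRingType) (iS : {rmorphism R -> QS})
  (HiS : left_ring_of_fractions
           (fun r => r <> 0 /\ T (grr w sigma r)) iS)
  (* tilde S^{-1} tilde R *)
  (Qt : unitRingType) (it : {rmorphism Rt -> Qt})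
  (Hit : left_ring_of_fractions
           (fun s => (exists n, rees_deg w e n s) /\ T (rho2 s)) it)
  (* assumption: s r <> 0 for s in S and r <> 0 *)
  (Hreg : forall s r, s <> 0 -> T (grr w sigma s) -> r <> 0 -> s * r <> 0) :
  let t := e (-1) 1 in
  exists (p1 : {rmorphism Qt -> QS}) (p2 : {rmorphism Qt -> QT}),
    [/\ forall s r, (exists n, rees_deg w e n s) -> T (rho2 s) ->
          p1 ((it s)^-1 * it r) = (iS (rho1 s))^-1 * iS (rho1 r),
        forall s r, (exists n, rees_deg w e n s) -> T (rho2 s) ->
          p2 ((it s)^-1 * it r) = (alpha (rho2 s))^-1 * alpha (rho2 r),
        forall x, p1 x = 0 <-> exists y, x = (it t - 1) * y,
        forall x, p2 x = 0 <-> exists y, x = it t * y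
      & (* rho_2 is graded *)
        forall (n : int) (x : Qt),
          (exists s r k m, [/\ (exists j, rees_deg w e j s) /\ T (rho2 s),
             rees_deg w e k s, rees_deg w e m r, m - k = n
             & x = (it s)^-1 * it r]) ->
          (exists u g k m, [/\ T u, gr_deg w sigma k u, gr_deg w sigma m g,
             m - k = n & p2 x = (alpha u)^-1 * alpha g])].
Proof.
move=> t.
have T0 : ~ T 0 := frac_not0 Halpha.
pose St s := (exists n, rees_deg w e n s) /\ T (rho2 s).
have St_mul : mult_closed St := Stilde_mult_closed Hfil Hrees rho2 HTmul.
have f1_unit s : St s -> (iS \o rho1)%FUN s \is a GRing.unit.
  by move=> /(rho1_Stilde Hfil Hrho1 Hgr Hrho2 T0) /(frac_unit HiS).
have f2_unit s : St s -> (alpha \o rho2)%FUN s \is a GRing.unit.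
  by move=> [_ /(frac_unit Halpha)].
have [p1 p1E] := frac_lift_rmorphism St_mul Hit f1_unit.
have [p2 p2E] := frac_lift_rmorphism St_mul Hit f2_unit.
have t_central x : t * x = x * t := rees_t_central Hfil Hrees x.
exists p1, p2; split.
- by move=> s r ? ?; apply: p1E.
- by move=> s r ? ?; apply: p2E.
- have -> : it t - 1 = it (t - 1) by rewrite rmorphB rmorph1.
  apply: (frac_lift_ker St_mul Hit f1_unit p1E).
  + by move=> x; rewrite mulrBl mulrBr t_central mul1r mulr1.
  + by rewrite /= rmorphB rmorph1 (rho1_t Hfil Hrho1) subrr rmorph0.
  + exact: (frac_ker_rho1 Hfil Hrees Hrho1 rho2 HTmul.1 HiS Hreg).
- apply: (frac_lift_ker St_mul Hit f2_unit p2E t_central).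
  + by rewrite /= (rho2_t Hfil Hgr Hrho2) rmorph0.
  + exact: (frac_ker_rho2 Hfil Hrees Hgr Hrho2 Halpha HThom).
- move=> n x [s [r [k [m [sS [a ka sa] [b mb rb] mk ->]]]]].
  exists (rho2 s), (rho2 r), k, m; split => //; last exact: p2E.
  + by case: sS.
  + by exists a; rewrite // sa Hrho2.
  + by exists b; rewrite // rb Hrho2.
Qed.
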